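(* Let $n \in \mathbb{N}$ and let $J \in \mathcal{B}(\mathbb{C}^n)$ be nilpotent. If $J = MN - NM$ for some $M, N \in \mathcal{B}(\mathbb{C}^n)$ with $M^2 = 0 = N^2$, then $J^{\lfloor (n+1)/2 \rfloor} = 0$. In particular, if $n \ge 4$ and $J_n$ denotes the $n \times n$ nilpotent Jordan cell, then $J_n$ is similar to $-J_n$ but $J_n$ is not of the form $MN - NM$ with $M^2 = 0 = N^2$. *)

(* complex numbers are R[i] (mathcomp-real-closed 'complex')
   over an arbitrary realType R, so 'M[R[i]]_n models B(C^n). *)
From mathcomp Require Import all_boot all_algebra.
From mathcomp Require Export reals complex.
Set Implicit Arguments.
Unset Strict Implicit.
Unset Printing Implicit Defensive.
Import GRing.Theory.
Local Open Scope ring_scope.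

Definition mx_nilpotent (F : pzRingType) (n : nat) (A : 'M[F]_n) : Prop :=
  exists k : nat, A ^+ k = 0.

Definition jordan_cell (F : pzRingType) (n : nat) : 'M[F]_n :=
  \matrix_(i < n, j < n) (((i.+1 == j)%N)%:R : F).

(* With C := M + N and D := M - N one has C ^+ 2 = MN + NM, D C = - C D and
   D ^+ 2 = - C ^+ 2.  Since (MN)(NM) = (NM)(MN) = 0, J = MN - NM is nilpotent
   iff MN and NM are, and then so is C.  Let X := C ^+ n.-1.  If X != 0, C is
   a single Jordan block, so the left kernel of C is a line; it contains X and,
   by anticommutation, X D, so X D != 0 would give X = Y X D and then
   X D = Y X D ^+ 2 = - Y X C ^+ 2 = 0.  Hence X D = X C = 0, and X M = X N = 0
   as 2 is invertible.  Now (MN) ^+ k.+1 = C ^+ k.*2.+1 N and likewise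
   (NM) ^+ k.+1 vanish once n <= k.*2.+2, and
   J ^+ k.+1 = (MN) ^+ k.+1 + (- NM) ^+ k.+1.
   The Jordan cell escapes this bound because its k-th power is nonzero for
   k < n, and it is conjugate to its opposite by diag ((-1) ^+ i). *)

From mathcomp Require Import all_boot all_algebra.
From mathcomp Require Import reals complex.
From mathcomp Require Import zify.

Set Implicit Arguments.
Unset Strict Implicit.
Unset Printing Implicit Defensive.
Import GRing.Theory Num.Theory.
Local Open Scope ring_scope.

Section RingIdentities.
Variable R : pzRingType.
Implicit Types x y : R.

Lemma exprSD_mul0 x y i : x * y = 0 -> y * x = 0 ->
  (x + y) ^+ i.+1 = x ^+ i.+1 + y ^+ i.+1.
Proof.
move=> xy0 yx0; elim: i => [|i IHi]; first by rewrite !expr1.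
rewrite exprS IHi mulrDl !mulrDr -!exprS [y ^+ i.+1]exprS [x ^+ i.+1]exprS.
by rewrite !mulrA xy0 yx0 !mul0r addr0 add0r.
Qed.

Lemma exprS_eq0_subr x y k : y * x = 0 -> (x - y) ^+ k = 0 -> x ^+ k.+1 = 0.
Proof.
move=> yx0 xyk0; suff -> : x ^+ k.+1 = (x - y) ^+ k * x by rewrite xyk0 mul0r.
elim: k {xyk0} => [|k IHk]; first by rewrite expr0 mul1r expr1.
by rewrite exprSr IHk exprSr -!mulrA mulrBl yx0 subr0.
Qed.

Section SquareZero.
Variables x y : R.
Hypotheses (xx0 : x * x = 0) (yy0 : y * y = 0).

Lemma sqrrD_sqr0 : (x + y) ^+ 2 = x * y + y * x.
Proof. by rewrite expr2 mulrDl !mulrDr xx0 yy0 add0r addr0. Qed.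

Lemma sqrrB_sqr0 : (x - y) ^+ 2 = - (x + y) ^+ 2.
Proof.
rewrite !expr2 !(mulrDl, mulrDr, mulrN, mulNr) xx0 yy0.
by rewrite !(oppr0, add0r, addr0, opprD, opprK).
Qed.

Lemma mulrBD_sqr0 : (x - y) * (x + y) = - ((x + y) * (x - y)).
Proof.
rewrite !(mulrDl, mulrDr, mulrN, mulNr) xx0 yy0.
by rewrite !(oppr0, add0r, addr0, opprD, opprK).
Qed.

Lemma mul_sqr0_expr i : (x * y) ^+ i.+1 = (x + y) ^+ i.*2.+1 * y.
Proof.
elim: i => [|i IHi]; first by rewrite !expr1 mulrDl yy0 addr0.
rewrite doubleS -[i.*2.+3]/(2 + i.*2.+1)%N exprD -mulrA -IHi sqrrD_sqr0.
rewrite mulrDl -exprS [(x * y) ^+ i.+1]exprS !mulrA -[y * x * x]mulrA xx0.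
by rewrite mulr0 !mul0r addr0.
Qed.

End SquareZero.
End RingIdentities.

Section NilpotentMatrix.
Variables (F : fieldType) (n : nat) (C : 'M[F]_n).
Hypothesis nilC : mx_nilpotent C.

Lemma mxrank_exprS_lt j : C ^+ j != 0 -> (\rank (C ^+ j.+1) < \rank (C ^+ j))%N.
Proof.
move=> Cj_neq0; rewrite ltnNge; apply: contra Cj_neq0 => le_rank.
have le_Cj_CjS : (C ^+ j <= C ^+ j.+1)%MS.
  have le_CjS_Cj : (C ^+ j.+1 <= C ^+ j)%MS by rewrite exprS -mulmxE submxMl.
  by rewrite -(mxrank_leqif_sup le_CjS_Cj).2 eqn_leq le_rank mxrankS.
have le_Cj_CjD k : (C ^+ j <= C ^+ (j + k))%MS.
  elim: k => [|k IHk]; first by rewrite addn0.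
  apply: submx_trans IHk _.
  by rewrite addnS -addSn !exprD -!mulmxE submxMr.
have [k Ck0] := nilC.
by rewrite -submx0 -[X in (_ <= X)%MS](mulr0 (C ^+ j)) -Ck0 -exprD.
Qed.

Lemma mxrank_exprD_le i j :
  C ^+ (i + j) != 0 -> (\rank (C ^+ (i + j)) + j <= \rank (C ^+ i))%N.
Proof.
elim: j => [|j IHj]; first by rewrite addn0 addn0.
rewrite addnS => CiSj_neq0.
have Cij_neq0 : C ^+ (i + j) != 0.
  by apply: contraNneq CiSj_neq0 => Cij0; rewrite exprSr Cij0 mul0r.
have := mxrank_exprS_lt Cij_neq0; have := IHj Cij_neq0; lia.
Qed.

Lemma mx_nilpotent_expr_size : C ^+ n = 0.
Proof.
apply/eqP; apply: contraT => Cn_neq0.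
have := @mxrank_exprD_le 0 n Cn_neq0; rewrite add0n expr0 mxrank1.
by rewrite -[X in (_ <= X)%N]add0n leq_add2r leqn0 mxrank_eq0 (negPf Cn_neq0).
Qed.

Lemma expr_pred_size_mulr : C ^+ n.-1 * C = 0.
Proof.
have [n0 | n_gt0] := posnP n.
  by apply/matrixP => i; have := ltn_ord i; rewrite {2}n0.
by rewrite -exprSr prednK ?mx_nilpotent_expr_size.
Qed.

Lemma mxrank_kermx_le1 : C ^+ n.-1 != 0 -> (\rank (kermx C) <= 1)%N.
Proof.
move=> Cn1_neq0; rewrite mxrank_ker.
have [n_le1 | n_gt1] := leqP n 1; first lia.
have := @mxrank_exprD_le 1 n.-2; rewrite (_ : 1 + n.-2 = n.-1)%N; last lia.
have := Cn1_neq0; rewrite -mxrank_eq0 -lt0n expr1; lia.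
Qed.

End NilpotentMatrix.

Section AnticommutingMatrices.
Variables (F : fieldType) (n : nat).

Lemma expr_pred_size_mul_anticomm (C D : 'M[F]_n) : mx_nilpotent C ->
  D * C = - (C * D) -> D ^+ 2 = - C ^+ 2 -> C ^+ n.-1 * D = 0.
Proof.
move=> nilC DC DD; set X := C ^+ n.-1.
have XC0 : X * C = 0 := expr_pred_size_mulr nilC.
apply/eqP; apply: contraT => XD_neq0.
have X_neq0 : X != 0 by apply: contraNneq XD_neq0 => ->; rewrite mul0r.
have XD_ker : (X *m D <= kermx C)%MS.
  by apply/sub_kermxP; rewrite !mulmxE -mulrA DC mulrN mulrA XC0 mul0r oppr0.
have ker_XD : (kermx C <= X *m D)%MS.
  rewrite -(mxrank_leqif_sup XD_ker).2 eqn_leq mxrankS //=.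
  have := mxrank_kermx_le1 nilC X_neq0.
  by move: XD_neq0; rewrite -mulmxE -mxrank_eq0 -lt0n; lia.
have /submxP[Y XE] : (X <= X *m D)%MS.
  by apply: submx_trans ker_XD; apply/sub_kermxP; rewrite mulmxE.
move: XD_neq0; rewrite {1}XE mulmxE -!mulrA -expr2 DD mulrN expr2 !mulrA XC0.
by rewrite !mul0r oppr0 mulr0 eqxx.
Qed.

End AnticommutingMatrices.

Section SquareZeroCommutator.
Variables (F : fieldType) (n : nat).
Hypothesis two_neq0 : 2%:R != 0 :> F.

Lemma expr_pred_size_mul_sqr0 (M N : 'M[F]_n) :
  M * M = 0 -> N * N = 0 -> mx_nilpotent (M + N) ->
  (M + N) ^+ n.-1 * M = 0 /\ (M + N) ^+ n.-1 * N = 0.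
Proof.
move=> MM0 NN0 nilC; set X := (M + N) ^+ n.-1.
have XC0 : X * (M + N) = 0 := expr_pred_size_mulr nilC.
have XD0 : X * (M - N) = 0.
  apply: expr_pred_size_mul_anticomm nilC _ _.
    exact: mulrBD_sqr0.
  exact: sqrrB_sqr0.
have half_eq0 (A : 'M[F]_n) : A *+ 2 = 0 -> A = 0.
  by move/eqP; rewrite -scaler_nat scaler_eq0 (negPf two_neq0) => /eqP.
split; apply: half_eq0; rewrite mulr2n -mulrDr.
  have -> : M + M = (M + N) + (M - N) by rewrite addrACA subrr addr0.
  by rewrite mulrDr XC0 XD0 addr0.
have -> : N + N = (M + N) - (M - N) by rewrite opprB [RHS]addrC addrA subrK.
by rewrite mulrBr XC0 XD0 subr0.
Qed.

Lemma sqr0_commutator_expr_half (M N : 'M[F]_n) :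
  M * M = 0 -> N * N = 0 -> mx_nilpotent (M * N - N * M) ->
  (M * N - N * M) ^+ ((n + 1) %/ 2) = 0.
Proof.
move=> MM0 NN0 [k Jk0].
have MNNM0 : M * N * (N * M) = 0 by rewrite mulrA -(mulrA M) NN0 mulr0 mul0r.
have NMMN0 : N * M * (M * N) = 0 by rewrite mulrA -(mulrA N) MM0 mulr0 mul0r.
have MNk0 : (M * N) ^+ k.+1 = 0 := exprS_eq0_subr NMMN0 Jk0.
have NMk0 : (N * M) ^+ k.+1 = 0.
  by apply: exprS_eq0_subr MNNM0 _; rewrite -opprB exprNn Jk0 mulr0.
have nilC : mx_nilpotent (M + N).
  exists (k.+1).*2; rewrite -mul2n exprM sqrrD_sqr0 //.
  by rewrite exprSD_mul0 // MNk0 NMk0 addr0.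
have [XM0 XN0] := expr_pred_size_mul_sqr0 MM0 NN0 nilC.
case E : ((n + 1) %/ 2)%N => [|m].
  by apply/matrixP => i; have := ltn_ord i; lia.
have le_n : (n.-1 <= m.*2.+1)%N by lia.
have mul_sqr0_vanish (x y : 'M[F]_n) : x * x = 0 -> y * y = 0 ->
    (x + y) ^+ n.-1 * y = 0 -> (x * y) ^+ m.+1 = 0.
  move=> xx0 yy0 XY0.
  by rewrite mul_sqr0_expr // -(subnK le_n) exprD -mulrA XY0 mulr0.
rewrite exprSD_mul0 ?mulrN ?mulNr ?MNNM0 ?NMMN0 ?oppr0 // exprNn.
rewrite mul_sqr0_vanish // (@mul_sqr0_vanish N M) ?(addrC N) //.
by rewrite mulr0 addr0.
Qed.

End SquareZeroCommutator.

Lemma jordan_cell_exprE (R : pzRingType) n k (i j : 'I_n) :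
  (jordan_cell R n ^+ k) i j = ((i + k)%N == j)%:R.
Proof.
elim: k i j => [|k IHk] i j; first by rewrite expr0 addn0 -idmxE mxE.
rewrite exprSr -mulmxE mxE; under eq_bigr => l _ do rewrite IHk mxE.
have [lt_ik_n | le_n_ik] := ltnP (i + k) n.
  rewrite (bigD1 (Ordinal lt_ik_n)) //= eqxx mul1r addnS big1 ?addr0 //.
  move=> l ne_l.
  suff /negPf-> : (i + k)%N != l by rewrite mul0r.
  by apply: contra ne_l => /eqP ik_l; apply/eqP/val_inj.
rewrite big1 => [|l _].
  suff /negPf-> : (i + k.+1)%N != j by [].
  by apply/eqP => ikS_j; have := ltn_ord j; lia.
suff /negPf-> : (i + k)%N != l by rewrite mul0r.
by apply/eqP => ik_l; have := ltn_ord l; lia.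
Qed.

Lemma jordan_cell_nilpotent (R : pzRingType) n : mx_nilpotent (jordan_cell R n).
Proof.
exists n; apply/matrixP => i j; rewrite jordan_cell_exprE mxE.
suff /negPf-> : (i + n)%N != j by [].
by apply/eqP => in_j; have := ltn_ord j; lia.
Qed.

Lemma jordan_cell_expr_neq0 (R : nzRingType) n k :
  (k < n)%N -> jordan_cell R n ^+ k != 0.
Proof.
move=> lt_k_n; have lt_0_n : (0 < n)%N by lia.
apply/eqP => /matrixP/(_ (Ordinal lt_0_n) (Ordinal lt_k_n)).
by rewrite jordan_cell_exprE mxE eqxx => /eqP; rewrite oner_eq0.
Qed.

Lemma jordan_cell_similar_opp (F : fieldType) n :
  similar_in unitmx (jordan_cell F n) (- jordan_cell F n).
Proof.
set P := diag_mx (\row_(i < n) (-1 : F) ^+ i).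
have P_unit : P \in unitmx.
  rewrite unitmxE det_diag; apply/unitr_prod => i _.
  by rewrite mxE unitrX ?unitrN1.
exists P => //; apply/(similarP P_unit)/matrixP => i j.
rewrite mul_diag_mx mul_mx_diag !mxE.
have [<-|] := eqVneq i.+1 j; last by rewrite mulr0 oppr0 mul0r.
by rewrite mulr1 mulr1n mulN1r exprS mulN1r opprK.
Qed.

Local Open Scope complex_scope.

Theorem corollary3p04 (R : realType) :
  (forall (n : nat) (J M N : 'M[R[i]]_n),
      mx_nilpotent J -> M *m M = 0 -> N *m N = 0 ->
      J = M *m N - N *m M ->
      J ^+ ((n + 1) %/ 2)%N = 0)
  /\
  (forall n : nat, (4 <= n)%N ->
      similar_in unitmx (jordan_cell R[i] n) (- jordan_cell R[i] n)
      /\ ~ (exists M N : 'M[R[i]]_n,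
              M *m M = 0 /\ N *m N = 0 /\
              jordan_cell R[i] n = M *m N - N *m M)).
Proof.
have two_neq0 : 2%:R != 0 :> R[i] by rewrite pnatr_eq0.
split=> [n J M N nilJ MM0 NN0 JE | n n_ge4].
  rewrite !mulmxE in MM0 NN0 JE; rewrite JE in nilJ *.
  exact: sqr0_commutator_expr_half.
split; first exact: jordan_cell_similar_opp.
case=> M [N [MM0 [NN0 JE]]]; rewrite !mulmxE in MM0 NN0 JE.
have := sqr0_commutator_expr_half two_neq0 MM0 NN0; rewrite -JE.
move/(_ (jordan_cell_nilpotent _ _)); apply/eqP/jordan_cell_expr_neq0; lia.
Qed.
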